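(* Let $\gamma:(0,T)\to(\mathbb H,0,\infty)$ be $C^3$ with driving function $\lambda$. If $0<LC_\gamma(t)\le A$ for all $t$, then $\lambda$ is $\mathrm{Lip}(1/2)$ with norm bounded above by $\sqrt{2A}$, i.e. $|\lambda(t)-\lambda(s)|\le\sqrt{2A}\sqrt{|t-s|}$ for all $s,t$ in the domain of $\lambda$.
   Context: $\mathbb H$ is the upper half-plane. $\gamma:(0,T)\to(\mathbb H,0,\infty)$ means $\gamma[0,T)$ is a simple curve with $\gamma(0,T)\subset\mathbb H$, $\gamma(0)=0$. The driving function $\lambda$ of $\gamma$: with $\gamma$ parametrized by halfplane capacity, i.e. $g_t:\mathbb H\setminus\gamma(0,t]\to\mathbb H$ conformal with $g_t(z)=z+\frac{2t}{z}+O(1/z^2)$ at $\infty$, $g_t$ solves $\partial_tg_t(z)=2/(g_t(z)-\lambda(t))$, $g_0(z)=z$, with $\lambda(t)=g_t(\gamma(t))$; $\lambda$ is defined on $[0,\tau)$ where $\tau$ is the halfplane capacity of $\gamma$. The Loewner curvature of such a $C^3$ curve is $LC_\gamma(t)=\lambda'(t)^3/\lambda''(t)$ (with $0/0:=0$ and $x/0=\infty$ for $x\neq0$). *)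

From Stdlib Require Import Reals.
From Coquelicot Require Import Coquelicot.
Open Scope R_scope.

Definition UHP (z : C) : Prop := 0 < Im z.

Definition holo_at (f : C -> C) (z : C) : Prop :=
  @ex_derive C_AbsRing C_NormedModule f z.

Definition C3_real_on (f : R -> R) (a b : R) : Prop :=
  forall t, a < t < b ->
    (forall k, (k <= 3)%nat -> ex_derive_n f k t) /\
    continuous (Derive_n f 3) t.

Definition C3_curve (T : R) (gamma : R -> C) : Prop :=
  C3_real_on (fun t => Re (gamma t)) 0 T /\ C3_real_on (fun t => Im (gamma t)) 0 T.

(** gamma : (0,T) -> (H,0,oo): gamma[0,T) simple, gamma(0) = 0,
    gamma(0,T) in H, gamma continuous at 0 from the right. *)
Definition curve_in_H (T : R) (gamma : R -> C) : Prop :=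
  gamma 0 = 0%C /\
  (forall t, 0 < t < T -> UHP (gamma t)) /\
  (forall s t, 0 <= s < T -> 0 <= t < T -> gamma s = gamma t -> s = t) /\
  filterlim (fun t => Re (gamma t)) (at_right 0) (locally 0) /\
  filterlim (fun t => Im (gamma t)) (at_right 0) (locally 0).

Definition slit_domain (gamma : R -> C) (t : R) (z : C) : Prop :=
  UHP z /\ ~ (exists s, 0 < s <= t /\ gamma s = z).

Definition conformal_onto_H (D : C -> Prop) (g : C -> C) : Prop :=
  (forall z, D z -> holo_at g z) /\
  (forall z w, D z -> D w -> g z = g w -> z = w) /\
  (forall z, D z -> UHP (g z)) /\
  (forall w, UHP w -> exists z, D z /\ g z = w).

Definition hydrodynamic (D : C -> Prop) (g : C -> C) (c : R) : Prop :=
  exists M r0, 0 < r0 /\ forall z, D z -> r0 < Cmod z ->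
    Cmod (g z - z - RtoC c / z) <= M / (Cmod z ^ 2).

Definition boundary_value (D : C -> Prop) (g : C -> C) (w : C) (x : R) : Prop :=
  forall eps, 0 < eps -> exists delta, 0 < delta /\
    forall z, D z -> Cmod (z - w) < delta -> Cmod (g z - RtoC x) < eps.

(** lambda : [0,tau) -> R is the driving function of gamma, where tau (possibly
    +oo) is the halfplane capacity of gamma: phi(t) = hcap(gamma(0,t]) is the
    halfplane-capacity reparametrization, g_{phi(t)} : H \ gamma(0,t] -> H is
    the conformal map with g(z) = z + 2 phi(t)/z + O(1/z^2), and
    lambda(phi(t)) = g_{phi(t)}(gamma(t)). *)
Definition driving_function (T : R) (gamma : R -> C) (tau : Rbar) (lambda : R -> R) : Prop :=
  lambda 0 = 0 /\
  exists (phi : R -> R) (g : R -> C -> C),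
    phi 0 = 0 /\
    (forall s t, 0 <= s -> s < t -> t < T -> phi s < phi t) /\
    (forall u, (0 <= u /\ Rbar_lt u tau) <-> exists t, 0 <= t < T /\ phi t = u) /\
    (forall t, 0 < t < T ->
       conformal_onto_H (slit_domain gamma t) (g t) /\
       hydrodynamic (slit_domain gamma t) (g t) (2 * phi t) /\
       boundary_value (slit_domain gamma t) (g t) (gamma t) (lambda (phi t))).

(** Loewner curvature LC(t) = lambda'(t)^3 / lambda''(t), with 0/0 := 0 and
    x/0 := oo for x <> 0. *)
Definition LC (lambda : R -> R) (t : R) : Rbar :=
  let d1 := Derive lambda t in
  let d2 := Derive_n lambda 2 t in
  if Req_EM_T d2 0 then (if Req_EM_T d1 0 then Finite 0 else p_infty)
  else Finite (d1 ^ 3 / d2).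

(** With [u = lambda'], the Loewner curvature is [u^3 / u'], so
    [(1/u^2)' = -2 u' / u^3 = -2 / LC <= -2 / A]: the positive quantity
    [1/u^2] decreases at rate at least [2/A].  Hence the remaining lifetime
    is bounded, [tau - t <= A / (2 u(t)^2)]; in particular [tau] is finite
    and [|lambda'(t)| <= sqrt (2 A) / (2 sqrt (tau - t))].  Integrating,
    [|lambda t - lambda s| <= sqrt (2 A) (sqrt (tau - s) - sqrt (tau - t))
    <= sqrt (2 A) sqrt (t - s)]; the endpoint [s = 0] follows by right
    continuity of [lambda]. *)

From Stdlib Require Import Reals Lra.
From Coquelicot Require Import Coquelicot.
Open Scope R_scope.

Lemma nondecreasing_of_derive_nonneg (f df : R -> R) (a b : R) :
  a <= b ->
  (forall x, a <= x <= b -> is_derive f x (df x)) ->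
  (forall x, a <= x <= b -> 0 <= df x) ->
  f a <= f b.
Proof.
intros Hab Hd Hpos.
destruct (MVT_gen f a b df) as [c [Hc Heq]].
- intros x Hx; apply Hd; unfold Rmin, Rmax in Hx; destruct Rle_dec; lra.
- intros x Hx; apply continuity_pt_filterlim.
  apply (ex_derive_continuous (K := R_AbsRing) (V := R_NormedModule)).
  exists (df x); apply Hd; unfold Rmin, Rmax in Hx; destruct Rle_dec; lra.
- unfold Rmin, Rmax in Hc; destruct Rle_dec; [|lra].
  specialize (Hpos c Hc); nra.
Qed.

Lemma Rabs_sub_le_of_derive (f g df dg : R -> R) (a b : R) :
  a <= b ->
  (forall x, a <= x <= b -> is_derive f x (df x) /\ is_derive g x (dg x)) ->
  (forall x, a <= x <= b -> Rabs (df x) <= dg x) ->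
  Rabs (f b - f a) <= g b - g a.
Proof.
intros Hab Hd Hle.
assert (Hminus : g a - f a <= g b - f b).
{ apply (nondecreasing_of_derive_nonneg (fun x => g x - f x)
           (fun x => dg x - df x)); auto.
  - intros x Hx; destruct (Hd x Hx) as [Hf Hg]; exact (is_derive_minus _ _ _ _ _ Hg Hf).
  - intros x Hx; specialize (Hle x Hx); apply Rabs_le_between in Hle; lra. }
assert (Hplus : g a + f a <= g b + f b).
{ apply (nondecreasing_of_derive_nonneg (fun x => g x + f x)
           (fun x => dg x + df x)); auto.
  - intros x Hx; destruct (Hd x Hx) as [Hf Hg]; exact (is_derive_plus _ _ _ _ _ Hg Hf).
  - intros x Hx; specialize (Hle x Hx); apply Rabs_le_between in Hle; lra. }
apply Rabs_le; lra.
Qed.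

Lemma sqrt_sub_sqrt_le (x y : R) : 0 <= y <= x -> sqrt x - sqrt y <= sqrt (x - y).
Proof.
intros Hyx.
pose proof (sqrt_pos y); pose proof (sqrt_pos (x - y)).
assert (Hsq : sqrt x <= sqrt (sqrt y * sqrt y + sqrt (x - y) * sqrt (x - y)
                              + 2 * sqrt y * sqrt (x - y))).
{ apply sqrt_le_1_alt; rewrite !sqrt_sqrt by lra; nra. }
replace (sqrt y * sqrt y + sqrt (x - y) * sqrt (x - y) + 2 * sqrt y * sqrt (x - y))
  with ((sqrt y + sqrt (x - y)) * (sqrt y + sqrt (x - y))) in Hsq by ring.
rewrite sqrt_square in Hsq by lra; lra.
Qed.

Lemma holder_half_at_left_endpoint (f : R -> R) (K a t : R) :
  a < t -> 0 <= K ->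
  filterlim f (at_right a) (locally (f a)) ->
  (forall s, a < s <= t -> Rabs (f t - f s) <= K * sqrt (t - s)) ->
  Rabs (f t - f a) <= K * sqrt (t - a).
Proof.
intros Hat HK Hlim Hholder.
apply le_epsilon; intros eps Heps.
destruct (proj1 (filterlim_locally f (f a)) Hlim (mkposreal eps Heps)) as [d Hd].
pose proof (cond_pos d) as Hd_pos.
set (s := Rmin (a + d / 2) t).
assert (Hs : a < s <= t) by (unfold s, Rmin; destruct Rle_dec; lra).
assert (Hclose : Rabs (f s - f a) < eps).
{ apply (Hd s); [|lra].
  change (Rabs (s - a) < d); rewrite Rabs_pos_eq by lra.
  unfold s, Rmin; destruct Rle_dec; lra. }
assert (Hsqrt : K * sqrt (t - s) <= K * sqrt (t - a)).
{ apply Rmult_le_compat_l; [lra|]; apply sqrt_le_1_alt; lra. }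
pose proof (Hholder s Hs).
pose proof (Rabs_triang (f t - f s) (f s - f a)).
replace (f t - f s + (f s - f a)) with (f t - f a) in * by ring.
lra.
Qed.

Definition bounded_curvature_at (lam : R -> R) (A r : R) : Prop :=
  ex_derive lam r /\ ex_derive (Derive lam) r /\ Derive lam r <> 0 /\
  0 < Derive lam r ^ 3 / Derive (Derive lam) r <= A.

Lemma bounded_curvature_at_LC (lam : R -> R) (A r : R) :
  ex_derive lam r -> ex_derive (Derive lam) r ->
  Rbar_lt 0 (LC lam r) -> Rbar_le (LC lam r) A -> bounded_curvature_at lam A r.
Proof.
intros Hd Hd2; unfold LC; cbv zeta.
change (Derive_n lam 2 r) with (Derive (Derive lam) r).
destruct (Req_EM_T (Derive (Derive lam) r) 0) as [E|E].
- destruct (Req_EM_T (Derive lam r) 0); simpl; lra.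
- simpl; intros Hpos Hle; repeat split; auto; try lra.
  intros Z; rewrite Z in Hpos; unfold Rdiv in Hpos; ring_simplify in Hpos; lra.
Qed.

Section CurvatureBound.

Variables (lam : R -> R) (A : R) (tau : Rbar).
Hypothesis A_pos : 0 < A.
Hypothesis curvature_bounds :
  forall r, 0 < r -> Rbar_lt r tau -> bounded_curvature_at lam A r.

Lemma inv_sqr_derive_decreasing (a b : R) :
  0 < a <= b -> Rbar_lt b tau ->
  / Derive lam b ^ 2 + 2 * b / A <= / Derive lam a ^ 2 + 2 * a / A.
Proof.
intros Hab Hb.
assert (Hdom : forall x, a <= x <= b -> Rbar_lt x tau).
{ intros x Hx; apply Rbar_le_lt_trans with b; [simpl; lra | exact Hb]. }
apply Ropp_le_cancel.
apply (nondecreasing_of_derive_nonneg (fun x => - (/ Derive lam x ^ 2 + 2 * x / A))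
  (fun x => 2 / (Derive lam x ^ 3 / Derive (Derive lam) x) - 2 / A)); [lra| |].
- intros x Hx.
  destruct (curvature_bounds x ltac:(lra) (Hdom x Hx)) as (_ & Hd & Hu & Hq).
  assert (Hu' : Derive (Derive lam) x <> 0).
  { intros E; rewrite E, Rdiv_0_r in Hq; lra. }
  auto_derive; [repeat split; auto|].
  change (fun y => Derive lam y) with (Derive lam); field; repeat split; auto; lra.
- intros x Hx.
  destruct (curvature_bounds x ltac:(lra) (Hdom x Hx)) as (_ & _ & _ & Hq).
  assert (2 / A <= 2 / (Derive lam x ^ 3 / Derive (Derive lam) x)).
  { apply Rmult_le_compat_l; [lra|]; apply Rinv_le_contravar; lra. }
  lra.
Qed.

Lemma remaining_lifetime_le (r r' : R) :
  0 < r <= r' -> Rbar_lt r' tau -> 2 * (r' - r) <= A / Derive lam r ^ 2.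
Proof.
intros Hrr' Hr'.
pose proof (inv_sqr_derive_decreasing r r' Hrr' Hr') as Hdecr.
destruct (curvature_bounds r' ltac:(lra) Hr') as (_ & _ & Hu' & _).
assert (0 < / Derive lam r' ^ 2) by (apply Rinv_0_lt_compat, pow2_gt_0, Hu').
replace (2 * (r' - r)) with (A * (2 * r' / A - 2 * r / A)) by (field; lra).
apply Rmult_le_compat_l; lra.
Qed.

Lemma lifetime_finite (r : R) : 0 < r -> Rbar_lt r tau -> tau <> p_infty.
Proof.
intros Hr Hrtau E.
destruct (curvature_bounds r Hr Hrtau) as (_ & _ & Hu & _).
assert (Hw : 0 < A / Derive lam r ^ 2) by (apply Rdiv_lt_0_compat, pow2_gt_0, Hu; lra).
assert (Hlt : Rbar_lt (r + A / Derive lam r ^ 2) tau) by (rewrite E; exact I).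
pose proof (remaining_lifetime_le r (r + A / Derive lam r ^ 2) ltac:(lra) Hlt).
lra.
Qed.

End CurvatureBound.

Section FiniteLifetime.

Variables (lam : R -> R) (A tau : R).
Hypothesis A_pos : 0 < A.
Hypothesis curvature_bounds : forall r, 0 < r < tau -> bounded_curvature_at lam A r.

Lemma derive_sqr_le (r : R) : 0 < r < tau -> Derive lam r ^ 2 <= A / (2 * (tau - r)).
Proof.
intros Hr.
destruct (curvature_bounds r Hr) as (_ & _ & Hu & _).
pose proof (pow2_gt_0 _ Hu) as Hu2.
set (w := A / Derive lam r ^ 2).
assert (Hw : 0 < w) by (apply Rdiv_lt_0_compat; lra).
assert (Hlife : 2 * (tau - r) <= w).
{ apply Rnot_lt_le; intros Hlt.
  pose proof (remaining_lifetime_le lam A tau A_pos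
    (fun x Hx Hxt => curvature_bounds x (conj Hx Hxt))
    r (r + (w + 2 * (tau - r)) / 4) ltac:(lra) ltac:(simpl; lra)) as Hgap.
  fold w in Hgap; lra. }
apply (Rle_div_r _ _ (2 * (tau - r))); [lra|].
replace A with (w * Derive lam r ^ 2) by (unfold w; field; lra).
nra.
Qed.

Lemma Rabs_derive_le (x : R) :
  0 < x < tau -> Rabs (Derive lam x) <= sqrt (2 * A) / (2 * sqrt (tau - x)).
Proof.
intros Hx.
assert (Hs : 0 < sqrt (tau - x)) by (apply sqrt_lt_R0; lra).
assert (Hc : 0 < sqrt (2 * A) / (2 * sqrt (tau - x)))
  by (apply Rdiv_lt_0_compat; [apply sqrt_lt_R0|]; lra).
rewrite <- (Rabs_pos_eq _ (Rlt_le _ _ Hc)).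
apply Rsqr_le_abs_0.
rewrite Rsqr_div', Rsqr_mult, !Rsqr_sqrt, Rsqr_pow2 by lra.
replace (2 * A / (2² * (tau - x))) with (A / (2 * (tau - x))) by (unfold Rsqr; field; lra).
now apply derive_sqr_le.
Qed.

Lemma holder_half_interior (s t : R) :
  0 < s <= t -> t < tau ->
  Rabs (lam t - lam s) <= sqrt (2 * A) * sqrt (t - s).
Proof.
intros Hst Ht.
set (K := sqrt (2 * A)).
assert (HK : 0 <= K) by apply sqrt_pos.
assert (Hinc : Rabs (lam t - lam s)
               <= - K * sqrt (tau - t) - - K * sqrt (tau - s)).
{ apply (Rabs_sub_le_of_derive lam (fun x => - K * sqrt (tau - x))
           (Derive lam) (fun x => K / (2 * sqrt (tau - x)))); [lra| |].
  - intros x Hx.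
    destruct (curvature_bounds x ltac:(lra)) as (Hd & _).
    assert (0 < sqrt (tau - x)) by (apply sqrt_lt_R0; lra).
    split; [now apply Derive_correct|].
    auto_derive; [lra|]; replace (tau + - x) with (tau - x) by ring; field; lra.
  - intros x Hx; apply Rabs_derive_le; lra. }
pose proof (sqrt_sub_sqrt_le (tau - s) (tau - t) ltac:(lra)).
replace (tau - s - (tau - t)) with (t - s) in * by ring.
assert (K * (sqrt (tau - s) - sqrt (tau - t)) <= K * sqrt (t - s))
  by (apply Rmult_le_compat_l; lra).
lra.
Qed.

End FiniteLifetime.

Lemma holder_half_of_bounded_curvature (lam : R -> R) (A : R) (tau : Rbar) (s t : R) :
  filterlim lam (at_right 0) (locally (lam 0)) ->
  (forall r, 0 < r -> Rbar_lt r tau -> bounded_curvature_at lam A r) ->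
  0 <= s < t -> Rbar_lt t tau ->
  Rabs (lam t - lam s) <= sqrt (2 * A) * sqrt (t - s).
Proof.
intros Hright Hcurv Hst Ht.
destruct (Hcurv t ltac:(lra) Ht) as (_ & _ & _ & Hq).
assert (HA : 0 < A) by lra.
pose proof (lifetime_finite lam A tau HA Hcurv t ltac:(lra) Ht) as Hfin.
destruct tau as [tau0| |]; [|easy|easy].
pose proof (holder_half_interior lam A tau0 HA
              (fun r Hr => Hcurv r (proj1 Hr) (proj2 Hr))) as Hholder.
destruct (Rle_lt_or_eq_dec 0 s (proj1 Hst)) as [Hs|<-].
- apply Hholder; simpl in *; lra.
- apply holder_half_at_left_endpoint; [lra|apply sqrt_pos|exact Hright|].
  intros s' Hs'; apply Hholder; simpl in *; lra.
Qed.

Theorem lemma4p5 (T : R) (gamma : R -> C) (tau : Rbar) (lambda : R -> R) (A : R) :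
  0 < T ->
  curve_in_H T gamma ->
  C3_curve T gamma ->
  driving_function T gamma tau lambda ->
  (* regularity of the driving function of a C^3 curve (presupposed by LC) *)
  filterlim lambda (at_right 0) (locally (lambda 0)) ->
  (forall t, 0 < t -> Rbar_lt t tau -> continuity_pt lambda t) ->
  (forall t, 0 < t -> Rbar_lt t tau ->
     ex_derive lambda t /\ ex_derive (Derive lambda) t) ->
  (forall t, 0 < t -> Rbar_lt t tau ->
     Rbar_lt 0 (LC lambda t) /\ Rbar_le (LC lambda t) A) ->
  forall s t, 0 <= s -> Rbar_lt s tau -> 0 <= t -> Rbar_lt t tau ->
    Rabs (lambda t - lambda s) <= sqrt (2 * A) * sqrt (Rabs (t - s)).
Proof.
intros _ _ _ _ Hright _ Hderiv HLC s t Hs Hst Ht Htt.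
assert (Hcurv : forall r, 0 < r -> Rbar_lt r tau -> bounded_curvature_at lambda A r).
{ intros r Hr Hrt; destruct (Hderiv r Hr Hrt), (HLC r Hr Hrt).
  now apply bounded_curvature_at_LC. }
destruct (Rtotal_order s t) as [Hlt|[<-|Hgt]].
- rewrite (Rabs_pos_eq (t - s)) by lra.
  now apply (holder_half_of_bounded_curvature lambda A tau).
- rewrite !Rminus_diag, Rabs_R0, sqrt_0, Rmult_0_r; lra.
- rewrite Rabs_minus_sym, (Rabs_minus_sym t s), (Rabs_pos_eq (s - t)) by lra.
  now apply (holder_half_of_bounded_curvature lambda A tau).
Qed.
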